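(* Let $\mathcal{C}\subseteq\mathbb{R}^d$ be a closed convex set with $\mathbb{B}(r)\subseteq\mathcal{C}\subseteq\mathbb{B}(R)$, $0<r\le R$, let $\epsilon\in[0,1]$ and $\mathcal{C}_\epsilon:=(\sqrt{1-\epsilon}\,\mathcal{C}^\circ\oplus\sqrt{\epsilon}\,\mathbb{B}(r)^\circ)^\circ$. Define $\psi(\mathbf{w}):=\gamma_{\mathcal{C}_\epsilon}(\mathbf{w})^2$. Then for all $\mathbf{x},\mathbf{y}\in\mathbb{R}^d$, $$\psi\Big(\frac{\mathbf{x}+\mathbf{y}}{2}\Big)\le\frac{\psi(\mathbf{x})+\psi(\mathbf{y})}{2}-\frac{\epsilon}{4r^2}\|\mathbf{x}-\mathbf{y}\|^2.$$
   Context: $\mathbb{B}(\rho)$ is the closed Euclidean ball of radius $\rho$ at $0$. Support function $\sigma_{\mathcal{K}}(\mathbf{w})=\sup_{\mathbf{u}\in\mathcal{K}}\langle\mathbf{u},\mathbf{w}\rangle$; gauge function $\gamma_{\mathcal{K}}(\mathbf{w})=\inf\{\lambda>0:\mathbf{w}\in\lambda\mathcal{K}\}$; polar $\mathcal{K}^\circ=\{\mathbf{u}:\langle\mathbf{u},\mathbf{w}\rangle\le1\ \forall\mathbf{w}\in\mathcal{K}\}$ (so $\mathbb{B}(r)^\circ=\mathbb{B}(1/r)$). For closed convex sets $A,B$ containing $0$, $A\oplus B$ is the unique closed convex set with $\sigma_{A\oplus B}^2=\sigma_A^2+\sigma_B^2$. *)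

From HB Require Import structures.
From mathcomp Require Import all_boot all_order all_algebra.
From mathcomp Require Import all_classical all_reals all_analysis.
Set Implicit Arguments. Unset Strict Implicit. Unset Printing Implicit Defensive.
Import Order.TTheory GRing.Theory Num.Theory.
Import numFieldNormedType.Exports.
Local Open Scope classical_set_scope.
Local Open Scope ring_scope.

Section Defs.
Variables (R : realType) (d : nat).
Implicit Types (u w : 'rV[R]_d) (K : set 'rV[R]_d).

Definition dotp u w : R := \sum_(i < d) u 0 i * w 0 i.

Definition sqnorm u : R := dotp u u.

Definition cball0 (rho : R) : set 'rV[R]_d := [set u | sqnorm u <= rho ^+ 2].

Definition convex K : Prop :=
  forall u w (t : R), K u -> K w -> 0 <= t <= 1 -> K (t *: u + (1 - t) *: w).

Definition scale_set (c : R) K : set 'rV[R]_d := [set c *: u | u in K].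

(* support function sigma_K(w) = sup_{u in K} <u, w>
   (real-valued supremum; all sets to which it is applied below are bounded
   and nonempty, so it is the genuine supremum) *)
Definition support K w : R := sup [set dotp u w | u in K].

Definition gauge K w : R := inf [set l : R | 0 < l /\ scale_set l K w].

Definition polar K : set 'rV[R]_d := [set u | forall w, K w -> dotp u w <= 1].

(* A (+) B : the closed convex set with sigma_{A(+)B}^2 = sigma_A^2 + sigma_B^2,
   written out explicitly as the set whose support function is
   h = sqrt (sigma_A^2 + sigma_B^2) (h is sublinear, so this set is closed,
   convex and its support function is exactly h). *)
Definition oplus A B : set 'rV[R]_d :=
  [set u | forall w, dotp u w <= Num.sqrt (support A w ^+ 2 + support B w ^+ 2)].

End Defs.

(* With A := sqrt(1-eps) C° and B := sqrt(eps) B(r)°, the gauge of the polar of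
   A (+) B is its support function sqrt(sigma_A^2 + sigma_B^2), so
   psi = sigma_A^2 + sigma_B^2.  Here sigma_B(w)^2 = (eps / r^2) ||w||^2 satisfies
   the parallelogram identity, which yields exactly the strong-convexity defect,
   while sigma_A is sublinear and nonnegative, so sigma_A^2 is midpoint convex. *)
From Pilot Require Import Defs.
From HB Require Import structures.
From mathcomp Require Import all_boot all_order all_algebra.
From mathcomp Require Import all_classical all_reals all_analysis.
From mathcomp Require Import ring lra.
Import Order.TTheory GRing.Theory Num.Theory.
Import numFieldNormedType.Exports.
Local Open Scope classical_set_scope.
Local Open Scope ring_scope.
Set Implicit Arguments. Unset Strict Implicit. Unset Printing Implicit Defensive.
Local Notation support := Pilot.Defs.support.

Section InnerProduct.
Variables (R : realType) (d : nat).
Implicit Types (u v w : 'rV[R]_d).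

Lemma dotpC u w : dotp u w = dotp w u.
Proof. by apply: eq_bigr => i _; rewrite mulrC. Qed.

Lemma dotpDl u v w : dotp (u + v) w = dotp u w + dotp v w.
Proof. by rewrite /dotp -big_split; apply: eq_bigr => i _; rewrite mxE mulrDl. Qed.

Lemma dotpZl a u w : dotp (a *: u) w = a * dotp u w.
Proof. by rewrite /dotp mulr_sumr; apply: eq_bigr => i _; rewrite mxE mulrA. Qed.

Lemma dotp0l w : dotp 0 w = 0.
Proof. by rewrite -(scale0r 0) dotpZl mul0r. Qed.

Lemma dotpDr u v w : dotp w (u + v) = dotp w u + dotp w v.
Proof. by rewrite dotpC dotpDl !(dotpC w). Qed.

Lemma dotpZr a u w : dotp w (a *: u) = a * dotp w u.
Proof. by rewrite dotpC dotpZl dotpC. Qed.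

Lemma sqnorm_ge0 w : 0 <= sqnorm w.
Proof. by apply: sumr_ge0 => i _; rewrite -expr2 sqr_ge0. Qed.

Lemma sqnormZ a w : sqnorm (a *: w) = a ^+ 2 * sqnorm w.
Proof. by rewrite /sqnorm dotpZl dotpZr mulrA expr2. Qed.

Lemma sqnormD2 a b u w : sqnorm (a *: u + b *: w) =
  a ^+ 2 * sqnorm u + 2 * a * b * dotp u w + b ^+ 2 * sqnorm w.
Proof. by rewrite /sqnorm !dotpDl !dotpDr !dotpZl !dotpZr (dotpC w u); ring. Qed.

Lemma dotp_le_sqnorm_avg u w : 2 * dotp u w <= sqnorm u + sqnorm w.
Proof.
have := sqnorm_ge0 (1 *: u + (-1) *: w); rewrite sqnormD2; lra.
Qed.

Lemma sqnorm_midpoint u w :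
  sqnorm (2^-1 *: (u + w)) = (sqnorm u + sqnorm w) / 2 - sqnorm (u - w) / 4.
Proof.
have -> : u - w = 1 *: u + (-1) *: w by rewrite scale1r scaleN1r.
by rewrite scalerDr !sqnormD2; field.
Qed.

End InnerProduct.

Section SupportGauge.
Variables (R : realType) (d : nat).
Implicit Types (u v w : 'rV[R]_d) (K : set 'rV[R]_d).

(* Enough for [support K] to be the genuine, nonnegative supremum. *)
Definition has_support K := K 0 /\ forall w, exists M, forall u, K u -> dotp u w <= M.

Lemma has_support_sup K w : has_support K -> has_sup [set dotp u w | u in K].
Proof.
move=> [K0 Kb]; split; first by exists (dotp 0 w); exists 0.
by have [M HM] := Kb w; exists M => _ [u Ku <-]; exact: HM.
Qed.

Lemma support_ub K u w : has_support K -> K u -> dotp u w <= support K w.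
Proof. by move=> sK Ku; apply: (sup_upper_bound (has_support_sup w sK)); exists u. Qed.

Lemma support_ge0 K w : has_support K -> 0 <= support K w.
Proof. by move=> sK; rewrite -(dotp0l w); apply: support_ub => //; case: sK. Qed.

Lemma support_le K w b : has_support K -> (forall u, K u -> dotp u w <= b) ->
  support K w <= b.
Proof.
move=> [K0 _] Hb; apply: ge_sup; first by exists (dotp 0 w); exists 0.
by move=> _ [u Ku <-]; exact: Hb.
Qed.

Lemma support_approx K w e : has_support K -> 0 < e ->
  exists2 u, K u & support K w - e < dotp u w.
Proof.
move=> sK e0; have [_ [u Ku <-] He] := sup_adherent e0 (has_support_sup w sK).
by exists u.
Qed.

Lemma support_midpoint K x y : has_support K ->
  support K (2^-1 *: (x + y)) <= (support K x + support K y) / 2.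
Proof.
move=> sK; apply: support_le => // u Ku; rewrite dotpZr dotpDr.
by have := support_ub x sK Ku; have := support_ub y sK Ku; lra.
Qed.

Lemma support_sqr_midpoint K x y : has_support K ->
  support K (2^-1 *: (x + y)) ^+ 2 <= (support K x ^+ 2 + support K y ^+ 2) / 2.
Proof.
move=> sK; have := support_ge0 x sK; have := support_ge0 y sK => y0 x0.
apply: (@le_trans _ _ (((support K x + support K y) / 2) ^+ 2)).
  by rewrite lerXn2r ?nnegrE ?support_ge0 ?divr_ge0 ?addr_ge0 ?support_midpoint.
by have := sqr_ge0 (support K x - support K y); nra.
Qed.

(* Test the polar against the point (r / ||w||) w of the ball. *)
Lemma polar_dotp_le K r v w : 0 < r -> cball0 r `<=` K -> polar K v ->
  dotp v w <= Num.sqrt (sqnorm w) / r.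
Proof.
move=> r0 sK Kv; have := sqnorm_ge0 w; rewrite le_eqVlt => /orP[/eqP w0|w0].
  rewrite -w0 sqrtr0 mul0r leNgt; apply/negP => vw0.
  have Kw : K (2 / dotp v w *: w).
    by apply: sK; rewrite /cball0 /= sqnormZ -w0 mulr0 exprn_ge0 // ltW.
  by have := Kv _ Kw; rewrite dotpZr divfK ?gt_eqF //; lra.
set n := Num.sqrt (sqnorm w); have n0 : 0 < n by rewrite sqrtr_gt0.
have : dotp v ((r / n) *: w) <= 1.
  apply: Kv (sK _ _); rewrite /cball0 /= sqnormZ expr_div_n sqr_sqrtr ?sqnorm_ge0 //.
  by rewrite divfK ?lt0r_neq0.
rewrite dotpZr => Hv.
have -> : dotp v w = n / r * (r / n * dotp v w) by field; rewrite !gt_eqF.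
by rewrite -[leRHS]mulr1 ler_wpM2l // divr_ge0 // ltW.
Qed.

Lemma has_support_scale_polar K c r : 0 <= c -> 0 < r -> cball0 r `<=` K ->
  has_support (scale_set c (polar K)).
Proof.
move=> c0 r0 sK; split.
  by exists 0; [move=> w _; rewrite dotp0l ler01 | rewrite scaler0].
move=> w; exists (c * (Num.sqrt (sqnorm w) / r)) => _ [v Kv <-].
by rewrite dotpZl ler_wpM2l // (polar_dotp_le _ r0 sK).
Qed.

Lemma polar_cball0_normalized r w : 0 < r -> 0 < sqnorm w ->
  polar (cball0 r) ((r * Num.sqrt (sqnorm w))^-1 *: w).
Proof.
move=> r0 w0 z zr; set n := Num.sqrt (sqnorm w).
have n0 : 0 < n by rewrite sqrtr_gt0.
rewrite dotpZl ler_pdivrMl ?mulr_gt0 // mulr1.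
have := dotp_le_sqnorm_avg ((r / n) *: w) z.
rewrite dotpZl sqnormZ expr_div_n sqr_sqrtr ?sqnorm_ge0 // divfK ?gt_eqF ?exprn_gt0 //.
move: zr; rewrite /cball0 /= => zr Hrz.
have Hr : r / n * dotp w z <= r ^+ 2 by lra.
have -> : dotp w z = n / r * (r / n * dotp w z) by field; rewrite !gt_eqF.
have -> : r * n = n / r * r ^+ 2 by field; rewrite gt_eqF.
by rewrite ler_wpM2l // divr_ge0 // ltW.
Qed.

Lemma support_scale_polar_cball0 r e w : 0 < r -> 0 <= e ->
  support (scale_set (Num.sqrt e) (polar (cball0 r))) w =
  Num.sqrt e * Num.sqrt (sqnorm w) / r.
Proof.
move=> r0 e0; have sB := has_support_scale_polar (sqrtr_ge0 e) r0 (@subset_refl _ (cball0 r)).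
apply/eqP; rewrite eq_le; apply/andP; split.
  apply: support_le => // _ [v Bv <-]; rewrite dotpZl -mulrA ler_wpM2l ?sqrtr_ge0 //.
  exact: polar_dotp_le r0 (@subset_refl _ _) Bv.
have := sqnorm_ge0 w; rewrite le0r => /orP[/eqP w0|w0].
  by rewrite w0 sqrtr0 mulr0 mul0r support_ge0.
have Bv := polar_cball0_normalized r0 w0.
apply: le_trans (support_ub w sB (_ : _ (Num.sqrt e *: _))); last exact: (ex_intro2 _ _ _ Bv erefl).
set n := Num.sqrt (sqnorm w); have n0 : 0 < n by rewrite sqrtr_gt0.
have nn : n ^+ 2 = sqnorm w by rewrite sqr_sqrtr // ltW.
rewrite !dotpZl -/(sqnorm w) -/n.
have -> : (r * n)^-1 * sqnorm w = n / r by rewrite -nn; field; rewrite !gt_eqF.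
by rewrite mulrA.
Qed.

Lemma gauge_polarE D w h : 0 <= h ->
  (forall u, D u -> dotp u w <= h) ->
  (forall e, 0 < e -> exists2 u, D u & h - e <= dotp u w) ->
  gauge (polar D) w = h.
Proof.
move=> h0 Hub Happrox.
set E := [set l : R | 0 < l /\ scale_set l (polar D) w].
have memE l : h < l -> E l.
  move=> hl; have l0 : 0 < l by apply: le_lt_trans hl.
  split => //; exists (l^-1 *: w); last by rewrite scalerA divff ?gt_eqF // scale1r.
  move=> u Du; rewrite dotpZl dotpC ler_pdivrMl // mulr1.
  exact: le_trans (Hub _ Du) (ltW hl).
have lbE l : E l -> h <= l.
  move=> [l0 [v Dv vw]]; apply/ler_addgt0Pr => e e0.
  have [u Du Hu] := Happrox e e0.
  have : dotp u w <= l.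
    rewrite -vw dotpZr dotpC -[leRHS]mulr1.
    by apply: ler_wpM2l; [exact: ltW | exact: Dv].
  lra.
apply/eqP; rewrite eq_le; apply/andP; split.
  apply/ler_addgt0Pr => e e0; apply: ge_inf (memE _ _); last by rewrite ltrDl.
  by exists 0 => l [l0 _]; exact: ltW.
by apply: lb_le_inf; [exists (h + 1); apply: memE; rewrite ltrDl | exact: lbE].
Qed.

Lemma ler_sqrt_sumsq (a b : R) : 0 <= a -> a <= Num.sqrt (a ^+ 2 + b ^+ 2).
Proof.
move=> a0; apply: (@le_trans _ _ (Num.sqrt (a ^+ 2))).
  by rewrite sqrtr_sqr ger0_norm.
by rewrite ler_sqrt ?addr_ge0 ?sqr_ge0 // lerDl sqr_ge0.
Qed.

Lemma cauchy_schwarz2 (a b a' b' : R) : 0 <= a -> 0 <= b -> 0 <= a' -> 0 <= b' ->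
  a * a' + b * b' <= Num.sqrt (a ^+ 2 + b ^+ 2) * Num.sqrt (a' ^+ 2 + b' ^+ 2).
Proof.
move=> a0 b0 a'0 b'0; rewrite -sqrtrM ?addr_ge0 ?sqr_ge0 //.
apply: (@le_trans _ _ (Num.sqrt ((a * a' + b * b') ^+ 2))).
  by rewrite sqrtr_sqr ger0_norm // addr_ge0 // mulr_ge0.
rewrite ler_sqrt ?mulr_ge0 ?addr_ge0 ?sqr_ge0 //.
by have := sqr_ge0 (a * b' - b * a'); nra.
Qed.

(* The approximating point is the normalized combination a u1 + b u2 of near
   maximizers, with weights (a, b) := (sigma_A w, sigma_B w); it lies in A (+) B
   by Cauchy-Schwarz in the plane. *)
Lemma oplus_approx A B w e : has_support A -> has_support B -> 0 < e ->
  exists2 u, oplus A B u &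
    Num.sqrt (support A w ^+ 2 + support B w ^+ 2) - e <= dotp u w.
Proof.
move=> sA sB e0; set a := support A w; set b := support B w.
set h := Num.sqrt (a ^+ 2 + b ^+ 2).
have a0 : 0 <= a by apply: support_ge0.
have b0 : 0 <= b by apply: support_ge0.
have ah : a <= h by apply: ler_sqrt_sumsq.
have bh : b <= h by rewrite /h addrC; apply: ler_sqrt_sumsq.
have := sqrtr_ge0 (a ^+ 2 + b ^+ 2); rewrite -/h le_eqVlt => /orP[/eqP h0|h0].
  exists 0; first by move=> w'; rewrite dotp0l sqrtr_ge0.
  by rewrite dotp0l -h0; lra.
have e2 : 0 < e / 2 by rewrite divr_gt0.
have [u1 Au1 H1] := support_approx w sA e2.
have [u2 Bu2 H2] := support_approx w sB e2.
exists (h^-1 *: (a *: u1 + b *: u2)).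
  move=> w'; rewrite dotpZl dotpDl !dotpZl mulrC ler_pdivrMr //.
  apply: le_trans (_ : a * support A w' + b * support B w' <= _).
    by apply: lerD; apply: ler_wpM2l => //; apply: support_ub.
  by rewrite [leRHS]mulrC; apply: cauchy_schwarz2 => //; apply: support_ge0.
rewrite dotpZl dotpDl !dotpZl mulrC ler_pdivlMr //.
have K1 : a * (a - e / 2) <= a * dotp u1 w by apply: ler_wpM2l => //; apply: ltW.
have K2 : b * (b - e / 2) <= b * dotp u2 w by apply: ler_wpM2l => //; apply: ltW.
have hh : h ^+ 2 = a ^+ 2 + b ^+ 2 by rewrite sqr_sqrtr // addr_ge0 ?sqr_ge0.
nra.
Qed.

Lemma sqr_gauge_polar_oplus A B w : has_support A -> has_support B ->
  gauge (polar (oplus A B)) w ^+ 2 = support A w ^+ 2 + support B w ^+ 2.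
Proof.
move=> sA sB; rewrite (gauge_polarE (h := Num.sqrt (support A w ^+ 2 + support B w ^+ 2))).
- by rewrite sqr_sqrtr // addr_ge0 ?sqr_ge0.
- exact: sqrtr_ge0.
- by move=> u; apply.
- by move=> e e0; apply: oplus_approx.
Qed.

End SupportGauge.

Theorem mainTheorem3 (R : realType) (d : nat) (C : set 'rV[R]_d) (r Rad eps : R) :
  closed C -> convex C ->
  0 < r -> r <= Rad ->
  cball0 r `<=` C -> C `<=` cball0 Rad ->
  0 <= eps <= 1 ->
  let Ceps := polar (oplus (scale_set (Num.sqrt (1 - eps)) (polar C))
                           (scale_set (Num.sqrt eps) (polar (cball0 r)))) in
  let psi := fun w : 'rV[R]_d => gauge Ceps w ^+ 2 in
  forall x y : 'rV[R]_d,
    psi (2^-1 *: (x + y)) <=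
      (psi x + psi y) / 2 - eps / (4 * r ^+ 2) * sqnorm (x - y).
Proof.
move=> _ _ r0 _ rC _ /andP[e0 _] Ceps psi x y.
pose A := scale_set (Num.sqrt (1 - eps)) (polar C).
pose B := scale_set (Num.sqrt eps) (polar (cball0 (d := d) r)).
have sA : has_support A by apply: has_support_scale_polar (sqrtr_ge0 _) r0 rC.
have sB : has_support B by apply: has_support_scale_polar (sqrtr_ge0 _) r0 (@subset_refl _ _).
set k := eps / r ^+ 2.
have psiE w : psi w = support A w ^+ 2 + k * sqnorm w.
  rewrite /psi sqr_gauge_polar_oplus // support_scale_polar_cball0 //.
  by rewrite expr_div_n exprMn !sqr_sqrtr ?sqnorm_ge0 // /k mulrAC.
have -> : eps / (4 * r ^+ 2) = k / 4 by rewrite /k; field; rewrite gt_eqF // exprn_gt0.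
rewrite !psiE sqnorm_midpoint.
have := support_sqr_midpoint x y sA; lra.
Qed.
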